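(* Let $G=(V,E)$ be a finite simple connected graph and let $\lambda\in(0,1)$. Then $$\sum_{u\in V} t^{e}_{\lambda}(u)\;=\;\sum_{\substack{(k,l)\in V\times V\\ k\neq l}} d(k,l)\,\lambda^{d(k,l)}\;=\;\sum_{u\in V} c^{e}_{\lambda}(u),$$ where the middle sum runs over ordered pairs of distinct vertices.
   Context: $d(u,v)$ denotes the distance between vertices $u,v$ in $G$, and $[u]$ denotes the set of neighbours of $u$. For a vertex $u$, $t^{e}_{\lambda}(u)=\sum_{v\in V\setminus\{u\}} d(u,v)\lambda^{d(u,v)}$. For vertices $k,l$, $s^{kl}$ is the number of shortest $k$–$l$ paths, and for an edge $uv$, $s^{kl}_{uv}$ is the number of shortest $k$–$l$ paths that pass through the edge $uv$. The exponential edge betweenness of an edge $uv$ is $b^{e}_{\lambda}(uv)=\sum_{\{k,l\}} \frac{s^{kl}_{uv}}{s^{kl}}\lambda^{d(k,l)}$, the sum running over all unordered pairs $\{k,l\}$ of distinct vertices of $V$. The exponential betweenness centrality of a vertex $u$ is $c^{e}_{\lambda}(u)=\sum_{v\in[u]} b^{e}_{\lambda}(uv)$. *)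

(* A finite simple graph is a symmetric irreflexive relation
   e : rel T on a finType T. *)
From mathcomp Require Import all_boot all_order all_algebra.
Set Implicit Arguments. Unset Strict Implicit. Unset Printing Implicit Defensive.
Import Order.TTheory GRing.Theory Num.Theory.

Section Graph.
Variables (T : finType) (e : rel T).

Definition walkb (n : nat) (k l : T) (p : n.-tuple T) : bool :=
  path e k p && (last k p == l).

(* graph distance d(k,l): least n such that a walk of length n from k to l
   exists (searched among n < #|T|, which suffices in a connected graph) *)
Definition dist (k l : T) : nat :=
  find (fun n => [exists p : n.-tuple T, walkb k l p]) (iota 0 #|T|).

Definition shortest (k l : T) : {set (dist k l).-tuple T} :=
  [set p | walkb k l p].

Definition nsp (k l : T) : nat := #|shortest k l|.

Definition through (u v k : T) (p : seq T) : bool :=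
  has (fun xy : T * T => ((xy.1 == u) && (xy.2 == v)) || ((xy.1 == v) && (xy.2 == u)))
      (zip (k :: p) p).

Definition nsp_edge (u v k l : T) : nat :=
  #|[set p in shortest k l | through u v k p]|.

Local Open Scope ring_scope.
Variable R : realFieldType.

Definition t_exp (lam : R) (u : T) : R :=
  \sum_(v | v != u) (dist u v)%:R * lam ^+ dist u v.

(* b^e_lambda(uv): sum over unordered pairs {k,l} of distinct vertices,
   each represented once as (k,l) with enum_rank k < enum_rank l *)
Definition b_exp (lam : R) (u v : T) : R :=
  \sum_(k : T) \sum_(l : T | (enum_rank k < enum_rank l)%N)
     ((nsp_edge u v k l)%:R / (nsp k l)%:R) * lam ^+ dist k l.

Definition c_exp (lam : R) (u : T) : R :=
  \sum_(v | e u v) b_exp lam u v.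

End Graph.

(** A shortest k-l walk visits no vertex twice (otherwise [shorten] would
    yield a shorter one), so it traverses d(k,l) distinct edges, i.e. 2 d(k,l)
    ordered pairs (u,v). Double counting the pairs (shortest walk, traversed
    edge) gives [sum_u sum_(v ~ u) s^{kl}_{uv} = 2 d(k,l) s^{kl}], so the sum
    of [c^e_lambda] over all vertices is the sum over unordered pairs {k,l} of
    [2 d(k,l) lambda^d(k,l)], which by symmetry of d is the sum over ordered
    pairs of [d(k,l) lambda^d(k,l)]. *)

From mathcomp Require Import all_boot all_order all_algebra.
Import GRing.Theory Num.Theory.

Set Implicit Arguments.
Unset Strict Implicit.
Unset Printing Implicit Defensive.

Section OrderedPairs.
Variables (V : nmodType) (T : finType) (F : T -> T -> V).
Hypothesis F_sym : forall k l, F k l = F l k.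
Local Open Scope ring_scope.

Lemma sum_ordered_pairs :
  \sum_k \sum_(l | l != k) F k l
    = \sum_k \sum_(l | (enum_rank k < enum_rank l)%N) F k l *+ 2.
Proof.
have split_ne k : \sum_(l | l != k) F k l
    = \sum_(l | (enum_rank k < enum_rank l)%N) F k l
      + \sum_(l | (enum_rank l < enum_rank k)%N) F k l.
  rewrite (bigID (fun l => enum_rank k < enum_rank l)%N) /=.
  congr (_ + _); apply: eq_bigl => l; rewrite -(inj_eq enum_rank_inj) -val_eqE.
    by case: ltngtP.
  by rewrite -leqNgt; case: ltngtP.
under eq_bigr => k _ do rewrite split_ne.
rewrite big_split /= [X in _ + X](exchange_big_dep predT) //=.
rewrite -big_split; apply: eq_bigr => k _; rewrite -big_split /=.
by apply: eq_bigr => l _; rewrite F_sym.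
Qed.

End OrderedPairs.

Section Walks.
Variables (T : finType) (e : rel T).

Definition has_walk (n : nat) (k l : T) := [exists p : n.-tuple T, walkb e k l p].

Lemma has_walkP n k l :
  reflect (exists p : seq T, [/\ size p = n, path e k p & last k p = l]) (has_walk n k l).
Proof.
apply: (iffP existsP) => [[p /andP[p_path /eqP p_last]] | [p [p_size p_path p_last]]].
  by exists (val p); rewrite size_tuple.
have /eqP p_size' := p_size.
by exists (Tuple p_size'); rewrite /walkb p_path p_last eqxx.
Qed.

Lemma size_shorten_lt k p :
  path e k p -> ~~ uniq (k :: p) -> size (shorten k p) < size p.
Proof.
move=> p_path; case: (shortenP p_path) => p' _ uniq_p' sub_p' not_uniq.
rewrite ltnNge; apply: contra not_uniq => le_size.
apply: (leq_size_uniq uniq_p' _ (le_size : size (k :: p) <= size (k :: p'))).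
move=> x; rewrite !inE.
by case/orP=> [-> // | /sub_p' ->]; rewrite orbT.
Qed.

Lemma through_cons u v x y (p : seq T) :
  through u v x (y :: p) = ((x == u) && (y == v) || (x == v) && (y == u)) || through u v y p.
Proof. by []. Qed.

Lemma through_mem u v x (p : seq T) : through u v x p -> (u \in x :: p) && (v \in x :: p).
Proof.
elim: p x => [|y p IHp] x //; rewrite through_cons => /orP[|/IHp].
  by case/orP => /andP[/eqP-> /eqP->]; rewrite !inE !eqxx !orbT.
by case/andP=> u_in v_in; rewrite inE u_in inE v_in !orbT.
Qed.

Lemma card_through x (p : seq T) : uniq (x :: p) ->
  (\sum_(uv : T * T) through uv.1 uv.2 x p)%N = (size p).*2.
Proof.
elim: p x => [|y p IHp] x; first by rewrite big1.
rewrite cons_uniq => /andP[x_notin uniq_yp].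
have x_neq_y : x != y by apply: contra x_notin => /eqP->; rewrite mem_head.
transitivity (\sum_(uv : T * T)
    ((uv == (x, y)) + (uv == (y, x)) + through uv.1 uv.2 y p))%N.
  apply: eq_bigr => -[u v] _; rewrite through_cons /= !xpair_eqE.
  have [->|u_neq_x] := eqVneq u x.
    have -> : through x v y p = false.
      by apply/negbTE; apply: contra x_notin => /through_mem/andP[].
    rewrite /= [y == x]eq_sym (negbTE x_neq_y) !andbF andFb !orbF !addn0.
    by rewrite eq_sym; case: (v == y).
  have [->|v_neq_x] := eqVneq v x.
    have -> : through u x y p = false.
      by apply/negbTE; apply: contra x_notin => /through_mem/andP[].
    by rewrite /= ?eqxx ?andbT ?orbF ?addn0 eq_sym; case: (u == y).
  by rewrite andbF.
rewrite !big_split /= IHp // -!big_mkcondr /= !big_pred1_eq.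
by rewrite doubleS.
Qed.

Lemma nsp_edgeE u v k l :
  nsp_edge e u v k l = (\sum_(p in shortest e k l) through u v k p)%N.
Proof.
rewrite /nsp_edge -sum1_card big_mkcond [RHS]big_mkcond; apply: eq_bigr => p _.
by rewrite inE; case: (_ \in _); case: through.
Qed.

Section Symmetric.
Hypothesis e_sym : symmetric e.

Lemma has_walk_sym n k l : has_walk n k l -> has_walk n l k.
Proof.
move/has_walkP=> [p [p_size p_path p_last]]; apply/has_walkP.
exists (rev (belast k p)); split.
- by rewrite size_rev size_belast.
- by rewrite -p_last rev_path (eq_path (e' := e)) // => x y /=; rewrite e_sym.
- by case: p {p_size p_path} p_last => [|y p] /= <-; rewrite ?rev_cons ?last_rcons.
Qed.

Lemma dist_sym k l : dist e k l = dist e l k.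
Proof. by apply: eq_find => n; apply/idP/idP; apply: has_walk_sym. Qed.

Lemma through_edge u v x (p : seq T) :
  path e x p -> through u v x p -> e u v.
Proof.
elim: p x => [|y p IHp] x //= /andP[e_xy p_path].
rewrite through_cons => /orP[/orP[]/andP[/eqP<- /eqP<-] // | /IHp]; last exact.
by rewrite e_sym.
Qed.

Section Connected.
Hypothesis e_conn : forall x y : T, connect e x y.

Lemma has_walk_lt_card k l : has (fun n => has_walk n k l) (iota 0 #|T|).
Proof.
have [p p_path p_last] := connectP (e_conn k l).
move: p_last; case: (shortenP p_path) => p' p'_path uniq_p' _ p'_last.
apply/hasP; exists (size p'); last by apply/has_walkP; exists p'.
rewrite mem_iota /= -ltnS -[(size p').+1]/(size (k :: p')).
by rewrite -(card_uniqP uniq_p') ltnS max_card.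
Qed.

Lemma dist_lt_card k l : dist e k l < #|T|.
Proof. by rewrite -[#|T|](size_iota 0) -has_find has_walk_lt_card. Qed.

Lemma has_walk_dist k l : has_walk (dist e k l) k l.
Proof.
by have := nth_find 0 (has_walk_lt_card k l); rewrite nth_iota ?dist_lt_card.
Qed.

Lemma no_walk_lt_dist m k l : m < dist e k l -> ~~ has_walk m k l.
Proof.
move=> lt_m_dist; have := before_find 0 lt_m_dist.
by rewrite nth_iota ?(ltn_trans lt_m_dist) ?dist_lt_card // => /negbT.
Qed.

Lemma shortest_uniq k l (p : (dist e k l).-tuple T) :
  p \in shortest e k l -> uniq (k :: p).
Proof.
rewrite inE => /andP[p_path /eqP p_last]; apply/negPn/negP => not_uniq.
have := size_shorten_lt p_path not_uniq; rewrite size_tuple => /no_walk_lt_dist.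
case: (shortenP p_path) p_last => p' p'_path _ _ p'_last /negP; apply.
by apply/has_walkP; exists p'.
Qed.

Lemma nsp_gt0 k l : 0 < nsp e k l.
Proof.
by have /existsP[p walk_p] := has_walk_dist k l; apply/card_gt0P; exists p; rewrite inE.
Qed.

Lemma sum_nsp_edge k l :
  (\sum_(uv | e uv.1 uv.2) nsp_edge e uv.1 uv.2 k l)%N = nsp e k l * (dist e k l).*2.
Proof.
under eq_bigr => uv _ do rewrite nsp_edgeE.
rewrite exchange_big /= /nsp -sum_nat_const; apply: eq_bigr => p p_shortest.
have p_path : path e k p by move: p_shortest; rewrite inE => /andP[].
rewrite -[in RHS](size_tuple p) -(card_through (shortest_uniq p_shortest)).
rewrite big_mkcond; apply: eq_bigr => -[u v] _ /=.
by case: ifP => // not_e_uv; rewrite (contraFF (through_edge p_path) not_e_uv).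
Qed.

End Connected.
End Symmetric.
End Walks.

Section ExponentialBetweenness.
Local Open Scope ring_scope.
Variables (T : finType) (e : rel T) (R : realFieldType) (lam : R).
Hypotheses (e_sym : symmetric e) (e_conn : forall x y : T, connect e x y).

Lemma sum_c_exp : \sum_u c_exp e lam u
  = \sum_k \sum_(l | (enum_rank k < enum_rank l)%N) (dist e k l)%:R * lam ^+ dist e k l *+ 2.
Proof.
rewrite /c_exp /b_exp pair_big_dep; under eq_bigr do rewrite pair_big_dep.
rewrite exchange_big [RHS]pair_big_dep; apply: eq_bigr => -[k l] _ /=.
rewrite -!big_distrl /= -natr_sum sum_nsp_edge // natrM [_ / _]mulrC mulKf; last first.
  by rewrite pnatr_eq0 -lt0n nsp_gt0.
by rewrite -addnn natrD mulr2n mulrDl.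
Qed.

End ExponentialBetweenness.

Local Open Scope ring_scope.

Theorem theorem1 (T : finType) (e : rel T) (R : realFieldType) (lam : R)
  (e_sym : symmetric e) (e_irr : irreflexive e)
  (e_conn : forall x y : T, connect e x y)
  (lam_gt0 : 0 < lam) (lam_lt1 : lam < 1) :
  \sum_(u : T) t_exp e lam u
    = \sum_(k : T) \sum_(l : T | l != k) (dist e k l)%:R * lam ^+ dist e k l
  /\
  \sum_(k : T) \sum_(l : T | l != k) (dist e k l)%:R * lam ^+ dist e k l
    = \sum_(u : T) c_exp e lam u.
Proof.
split; first by [].
by rewrite sum_c_exp // sum_ordered_pairs // => k l; rewrite dist_sym.
Qed.
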